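(* Let $X$ be a real Banach space and $C$ a weakly compact subset of $X$. Then the triplet $(X,C,\mathcal{CB}(X))$ has weak-$\mathscr{F}_{cmc}$-SACP, where $\mathcal{CB}(X)$ is the family of all nonempty closed bounded subsets of $X$ and $\mathscr{F}_{cmc}$ is the class of all convex, monotone, coercive functions $f:\ell_\infty^+(F)\to[0,\infty)$, $F\in\mathcal{CB}(X)$.
   Context: For a nonempty closed bounded set $F\subseteq X$, $\ell_\infty^+(F)$ is the set of bounded functions $\varphi:F\to[0,\infty)$ with the coordinatewise order and sup norm. $f$ is monotone if $\varphi_1\le\varphi_2$ implies $f(\varphi_1)\le f(\varphi_2)$, coercive if $f(\varphi)\to\infty$ as $\|\varphi\|_\infty\to\infty$. $r_f(x,F)=f((\|x-a\|)_{a\in F})$, $\mathrm{rad}_V^f(F)=\inf_{v\in V}r_f(v,F)$. $(X,V,\mathfrak{F})$ has weak-$\mathscr{F}$-SACP if for every $F\in\mathfrak{F}$, every $f\in\mathscr{F}$ on $\ell_\infty^+(F)$ and every sequence $(v_n)\subseteq V$ with $r_f(v_n,F)\to\mathrm{rad}_V^f(F)$, $(v_n)$ has a weakly convergent subsequence. *)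

From HB Require Import structures.
From mathcomp Require Import all_boot all_order all_algebra.
From mathcomp Require Import all_classical all_reals all_analysis.
Set Implicit Arguments. Unset Strict Implicit. Unset Printing Implicit Defensive.
Import Order.TTheory GRing.Theory Num.Theory.
Import numFieldNormedType.Exports.
Local Open Scope classical_set_scope.
Local Open Scope ring_scope.

Section Defs.
Context {R : realType} {X : normedModType R}.

Definition dual_index : Type :=
  {l : X -> R | (forall (a : R) (x y : X), l (a *: x + y) = a * l x + l y)
                /\ continuous l}.

(** The weak topology sigma(X, X^star): initial topology of x |-> (l |-> l x),
    the codomain carrying the product (pointwise) topology. *)
Definition weak_eval (x : X) : prod_topology (fun _ : dual_index => (R : topologicalType)) := fun l => sval l x.
Local Notation weakX := (initial_topology weak_eval).

Definition weakly_compact (C : set X) : Prop := @compact weakX C.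

Definition weak_cvg (u : nat -> X) (x : X) : Prop :=
  ((u : nat -> weakX) @ \oo --> (x : weakX)).

Definition linfty_pos (F : set X) (phi : {a : X | F a} -> R) : Prop :=
  (forall a, 0 <= phi a) /\ (exists M : R, forall a, phi a <= M).

Definition supnorm (F : set X) (phi : {a : X | F a} -> R) : R :=
  sup (range (fun a => `|phi a|)).

(** the class F_cmc on l_oo^+(F): functions l_oo^+(F) -> [0,oo) that are
    convex, monotone and coercive (values outside l_oo^+(F) are irrelevant) *)
Definition F_cmc (F : set X) (f : ({a : X | F a} -> R) -> R) : Prop :=
  [/\ (forall phi, linfty_pos phi -> 0 <= f phi),
      (forall phi1 phi2 (t : R), linfty_pos phi1 -> linfty_pos phi2 ->
         0 <= t -> t <= 1 ->
         f (fun a => t * phi1 a + (1 - t) * phi2 a) <= t * f phi1 + (1 - t) * f phi2),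
      (forall phi1 phi2, linfty_pos phi1 -> linfty_pos phi2 ->
         (forall a, phi1 a <= phi2 a) -> f phi1 <= f phi2) &
      (forall M : R, exists K : R, forall phi, linfty_pos phi ->
         K <= supnorm phi -> M <= f phi)].

Definition r_f (F : set X) (f : ({a : X | F a} -> R) -> R) (x : X) : R :=
  f (fun a => `|x - sval a|).

Definition rad_f (V : set X) (F : set X) (f : ({a : X | F a} -> R) -> R) : R :=
  inf [set r_f f v | v in V].

Definition CB : set (set X) :=
  [set F | F !=set0 /\ closed F /\ bounded_set F].

Definition weak_SACP (V : set X) (Fam : set (set X))
  (Cls : forall F : set X, (({a : X | F a} -> R) -> R) -> Prop) : Prop :=
  forall F : set X, Fam F ->
  forall f : ({a : X | F a} -> R) -> R, Cls F f ->
  forall v : nat -> X, (forall n, V (v n)) ->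
    (fun n => r_f f (v n)) @ \oo --> rad_f V f ->
    exists (s : nat -> nat) (x : X),
      {homo s : m n / (m < n)%N >-> (m < n)%N} /\ weak_cvg (v \o s) x.

End Defs.

From HB Require Import structures.
From mathcomp Require Import all_boot all_order all_algebra.
From mathcomp Require Import all_classical all_reals all_analysis.
From mathcomp Require Import lra.
Import Order.TTheory GRing.Theory Num.Theory.
Import numFieldNormedType.Exports.
Local Open Scope classical_set_scope.
Local Open Scope ring_scope.

(** For every norm bound [c], depth [N] and mesh [1/(m+1)], pick one
    functional of bound [c] realising each possible grid of values on
    [v 0, ..., v N]; this gives a countable family [e_k]. As
    [x |-> (e_k x)_k] is weakly continuous into the metrizable space [R^nat],
    a weak cluster point of [v] yields a subsequence [w] along which every
    [e_k] converges, so any two weak cluster points [x], [z] of [w] (along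
    finer filters) agree on every [e_k]. Functionals agreeing on [v] agree at
    such points, and Tychonoff compactness of the functionals of bound [c] in
    the pointwise topology makes this uniform: [l x] is approximated by
    [e_k x] as soon as [e_k] is close to [l] on an initial segment of [v].
    Hence [l x = l z], and compactness of [C] forces [l (w n) --> l x]. *)

Section cluster_points.
Context {T U : topologicalType}.

Lemma cluster_map {F : set_system T} {phi : T -> U} {z : T} :
  cluster F z -> {for z, continuous phi} -> cluster (phi @ F) (phi z).
Proof.
move=> Fz phi_z A B FA nB; have [t [At Bt]] := Fz _ _ FA (phi_z _ nB).
by exists (phi t).
Qed.

Lemma cluster_preimage_closed {F : set_system T} {phi : T -> U} {S : set U}
    {z : T} :
  cluster F z -> {for z, continuous phi} -> closed S -> F (phi @^-1` S) ->
  S (phi z).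
Proof.
move=> Fz phi_z S_closed FS; rewrite (closure_id S).1 //.
by have := cluster_map Fz phi_z; rewrite clusterE; apply.
Qed.

End cluster_points.

Lemma cluster_cvg_eq {R : realType} {T : topologicalType} {I : Type}
    {F : set_system I} {u : I -> T} {z : T} {phi : T -> R} {c : R} :
  cluster (u @ F) z -> {for z, continuous phi} -> phi \o u @ F --> c ->
  phi z = c.
Proof.
move=> Fz phi_z phi_c; have := cluster_map Fz phi_z.
by move=> /(cvg_cluster phi_c) /Rhausdorff.
Qed.

Lemma cvg_initial {S : choiceType} {T : topologicalType} (f : S -> T)
    (F : set_system S) {FF : Filter F} (x : S) :
  f @ F --> f x -> F --> (x : initial_topology f).
Proof.
move=> fF A; rewrite nbhsE => -[_ [[B B_open <-] Bfx] BA].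
by apply: filterS BA _; apply: fF; exact: open_nbhs_nbhs.
Qed.

Section product_topology.
Context {I : Type} {K : I -> topologicalType}.

Lemma prod_topology_cvg (F : set_system (prod_topology K)) {FF : Filter F}
    (f : prod_topology K) :
  (forall i, (fun g => g i) @ F --> f i) -> F --> f.
Proof. by move=> fF; apply/cvg_sup => i; apply: cvg_initial. Qed.

Lemma prod_topology_eval_continuous (i : I) :
  continuous (fun g : prod_topology K => g i).
Proof.
move=> f; have /cvg_sup/(_ i) f_i : nbhs f --> (f : prod_topology K) by [].
apply: cvg_trans (cvg_app _ f_i) _.
exact: (@initial_continuous _ _ (fun g : prod_topology K => g i)).
Qed.

End product_topology.

Lemma cluster_cvg_subseq {R : realType} {M : pseudoMetricType R}
    {u : nat -> M} {a : M} :
  cluster (u @ \oo) a ->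
  exists2 s : nat -> nat, (forall n, s n < s n.+1)%N & u \o s @ \oo --> a.
Proof.
move=> ua.
have next k N : exists n, (N < n)%N /\ ball a k.+1%:R^-1 (u n).
  have uN : (u @ \oo) (u @` [set n | (N < n)%N]).
    by exists N.+1 => // n /= Nn; exists n.
  have k_gt0 : 0 < k.+1%:R^-1 :> R by rewrite invr_gt0.
  have [_ [[n Nn <-] an]] := ua _ _ uN (nbhsx_ballx a _ k_gt0).
  by exists n.
pose g k N := sval (cid (next k N)).
have gP k N : (N < g k N)%N /\ ball a k.+1%:R^-1 (u (g k N)).
  by rewrite /g; case: cid.
pose s := fix s k := if k is k'.+1 then g k (s k') else g 0%N 0%N.
have s_ball k : ball a k.+1%:R^-1 (u (s k)).
  by case: k => [|k]; exact: (gP _ _).2.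
exists s => [n|]; first exact: (gP _ _).1.
apply/cvg_ballP => e e_gt0.
have [N _ Ne] := near_infty_natSinv_lt (PosNum e_gt0).
by exists N => // k /= Nk; apply: le_ball (s_ball k); exact/ltW/Ne.
Qed.

Lemma compact_cvg_of_clusters {R : realType} {T : topologicalType}
    {K : set T} {u : nat -> T} {phi : T -> R} {c : R} :
  compact K -> (forall n, K (u n)) -> continuous phi ->
  (forall (G : set_system nat) (z : T), ProperFilter G -> G --> \oo ->
     cluster (u @ G) z -> phi z = c) ->
  phi \o u @ \oo --> c.
Proof.
move=> K_compact uK phi_cont clusters; apply: contrapT => /cvgrPdist_lt.
move=> /existsNP [e /not_implyP [e_gt0 /= not_near]].
pose B N := [set j | (N <= j)%N /\ e <= `|c - phi (u j)|].
have B0 N : B N !=set0.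
  apply: contrapT => noB; apply: not_near; exists N => // j /= Nj.
  by rewrite ltNge; apply/negP => ej; apply: noB; exists j.
pose G := filter_from setT B.
have G_proper : ProperFilter G.
  apply: filter_from_proper => [|N _]; last exact: B0.
  apply: filter_from_filter => [|i j _ _]; first by exists 0%N.
  exists (maxn i j) => // k [ijk ek].
  by split; split => //; apply: leq_trans ijk; rewrite ?leq_maxl ?leq_maxr.
have G_oo : G --> \oo.
  by move=> A [N _ NA]; exists N => // j [Nj _]; exact: NA.
have uG : (u @ G) K by exists 0%N => // j _; exact: uK.
have [z [_ Gz]] := K_compact _ (fmap_proper_filter u G_proper) uG.
have : (~` ball c e) (phi z).
  apply: cluster_preimage_closed Gz (phi_cont z) _ _.
    by rewrite closedC; exact: ball_open.
  exists 0%N => // j [_ ej]; rewrite /ball /= => cej.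
  by rewrite leNgt cej in ej.
by rewrite (clusters G z G_proper G_oo Gz); apply; exact: ballxx.
Qed.

Lemma floor_eq_dist_lt1 {R : realType} (a b : R) :
  Num.floor a = Num.floor b -> `|a - b| < 1.
Proof.
move=> ab; have := floor_le a; have := floorD1_gt a.
have := floor_le b; have := floorD1_gt b.
rewrite ab intrD ltr_norml; lra.
Qed.

Section dual.
Context {R : realType} {X : normedModType R}.
Local Notation D := (@dual_index R X).
Local Notation weakX := (initial_topology (@weak_eval R X)).
Local Notation pointwise := (prod_topology (fun _ : X => R)).

Lemma dual_weak_continuous (l : D) : continuous (sval l : weakX -> R).
Proof.
move=> x; apply: cvg_trans; last first.
  exact: (@prod_topology_eval_continuous D (fun _ => R) l (weak_eval x)).
exact: cvg_app (@initial_continuous _ _ (@weak_eval R X) x).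
Qed.

Lemma dual_cvg_weak_cvg (u : nat -> X) (x : X) :
  (forall l : D, sval l \o u @ \oo --> sval l x) -> weak_cvg u x.
Proof.
by move=> ux; apply: cvg_initial; apply: prod_topology_cvg => l; exact: ux.
Qed.

Definition dual_bounded_by (c : nat) (l : D) :=
  forall x, `|sval l x| <= c%:R * `|x|.

Lemma dual_boundedP (l : D) : exists c, dual_bounded_by c l.
Proof.
pose l_linear : {linear X -> R} :=
  HB.pack (sval l) (GRing.isLinear.Build _ _ _ _ _ (svalP l).1).
have := @continuous_linear_bounded _ _ _ 0 l_linear ((svalP l).2 0).
move=> /linear_boundedP [M [M_real lM]]; exists (Num.bound `|M|).
by apply: lM; exact: le_lt_trans (real_ler_norm M_real) (archi_boundP _).
Qed.

Definition dual0 : D.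
Proof.
exists (fun=> 0); split=> [a x y|]; first by rewrite mulr0 addr0.
exact: cst_continuous.
Defined.

Lemma cluster_linear {F : set_system pointwise} {FF : Filter F}
    {g : pointwise} :
  F [set f : pointwise | linear (f : X -> R)] -> cluster F g ->
  linear (g : X -> R).
Proof.
move=> F_lin Fg a x y; apply/eqP; rewrite -subr_eq0; apply/eqP.
pose d (f : pointwise) := f (a *: x + y) - (a * f x + f y).
have ev z : continuous (fun f : pointwise => f z).
  exact: prod_topology_eval_continuous.
have a_cont : continuous (fun _ : pointwise => a) by exact: cst_continuous.
have d_cont : continuous d := fun f =>
  continuousB (ev _ f) (continuousD (continuousM (a_cont f) (ev x f)) (ev y f)).
suff : [set r : R | r = 0] (d g) by [].
apply: (cluster_preimage_closed Fg (d_cont g) (closed_eq (y := 0))).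
by apply: filterS F_lin => f f_lin; rewrite /d /= f_lin subrr.
Qed.

Lemma dual_bounded_cluster c (L : nat -> D) :
  (forall N, dual_bounded_by c (L N)) ->
  exists2 g : D, dual_bounded_by c g &
    cluster ((fun N => sval (L N) : pointwise) @ \oo) (sval g).
Proof.
move=> L_c.
pose seg (x : X) : set R := `[- (c%:R * `|x|), c%:R * `|x|]%classic.
pose box := [set f : pointwise | forall x, seg x (f x)].
have box_compact : compact box.
  by have := @tychonoff X (fun _ => R) seg (fun x => @segment_compact R _ _).
have L_box : ((fun N => sval (L N) : pointwise) @ \oo) box.
  by exists 0%N => // N _ x; rewrite /seg /= in_itv /= -ler_norml; exact: L_c.
have [g [g_box Lg]] := box_compact _ _ L_box.
have g_lin : linear (g : X -> R).
  by apply: cluster_linear Lg; exists 0%N => // N _; exact: (svalP (L N)).1.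
have g_c x : `|g x| <= c%:R * `|x|.
  by have := g_box x; rewrite /seg /= in_itv /= -ler_norml.
pose g_linear : {linear X -> R} :=
  HB.pack (g : X -> R) (GRing.isLinear.Build _ _ _ _ _ g_lin).
have g_cont : continuous (g : X -> R).
  apply: (@bounded_linear_continuous _ _ _ g_linear); apply/linear_boundedP.
  near=> r => x; apply: le_trans (g_c x) (ler_wpM2r (normr_ge0 x) _).
  by near: r; apply: nbhs_pinfty_ge; rewrite realE ler0n.
by exists (exist _ (g : X -> R) (conj g_lin g_cont)).
Unshelve. all: by end_near.
Qed.

(** With Hahn-Banach this says that [y] lies in the closed span of [v]. *)
Definition dual_determined (v : nat -> X) (y : X) :=
  forall l1 l2 : D,
    (forall n, sval l1 (v n) = sval l2 (v n)) -> sval l1 y = sval l2 y.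

Lemma cluster_dual_determined {v : nat -> X} {F : set_system nat}
    {FF : Filter F} {s : nat -> nat} {y : X} :
  cluster ((v \o s : nat -> weakX) @ F) y -> dual_determined v y.
Proof.
move=> Fy l1 l2 l12; apply/eqP; rewrite -subr_eq0; apply/eqP.
have l12_cont : {for y, continuous (fun x : weakX => sval l1 x - sval l2 x)}.
  exact: continuousB (dual_weak_continuous l1 y) (dual_weak_continuous l2 y).
apply: (cluster_cvg_eq Fy l12_cont).
have -> : (fun x : weakX => sval l1 x - sval l2 x) \o (v \o s) = fun=> 0.
  by apply/funext => i; rewrite /= l12 subrr.
exact: cvg_cst.
Qed.

Lemma dual_determined_approx {v : nat -> X} {y : X} {c} {l : D} {e : R} :
  dual_determined v y -> dual_bounded_by c l -> 0 < e ->
  exists N, forall l' : D, dual_bounded_by c l' ->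
    (forall n, (n <= N)%N -> `|sval l' (v n) - sval l (v n)| < N.+1%:R^-1) ->
    `|sval l' y - sval l y| < e.
Proof.
move=> vy l_c e_gt0; apply: contrapT => /forallNP bad.
have {}bad N : exists l' : D, [/\ dual_bounded_by c l',
    forall n, (n <= N)%N -> `|sval l' (v n) - sval l (v n)| < N.+1%:R^-1 &
    e <= `|sval l' y - sval l y|].
  have /existsNP [l' /not_implyP [l'_c /not_implyP [l'_v /negP]]] := bad N.
  by rewrite -leNgt => ?; exists l'.
pose L N := sval (cid (bad N)).
have LP N : [/\ dual_bounded_by c (L N),
    forall n, (n <= N)%N -> `|sval (L N) (v n) - sval l (v n)| < N.+1%:R^-1 &
    e <= `|sval (L N) y - sval l y|] by rewrite /L; case: cid.
have [g _ Lg] : exists2 g : D, dual_bounded_by c g &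
    cluster ((fun N => sval (L N) : pointwise) @ \oo) (sval g).
  by apply: dual_bounded_cluster => N; case: (LP N).
have g_v n : sval g (v n) = sval l (v n).
  apply: (cluster_cvg_eq Lg (prod_topology_eval_continuous (v n) _)).
  apply/cvgrPdist_lt => eps eps_gt0.
  have [M _ HM] := near_infty_natSinv_lt (PosNum eps_gt0).
  exists (maxn n M) => // N /= nMN; have [_ LN _] := LP N; rewrite distrC.
  apply: lt_trans (LN n _) _; first exact: leq_trans (leq_maxl _ _) nMN.
  exact: HM (leq_trans (leq_maxr _ _) nMN).
have : (~` ball (sval l y) e) (sval g y).
  apply: (cluster_preimage_closed Lg (prod_topology_eval_continuous y _)).
    by rewrite closedC; exact: ball_open.
  exists 0%N => // N _; have [_ _ LN] := LP N.
  by rewrite /ball /= distrC => Ny; rewrite leNgt Ny in LN.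
by rewrite (vy g l g_v); apply; exact: ballxx.
Qed.

End dual.

Section countable_dual_family.
Context {R : realType} {X : normedModType R}.
Local Notation D := (@dual_index R X).
Local Notation weakX := (initial_topology (@weak_eval R X)).
Variable v : nat -> X.

Definition dual_grid (m N : nat) (l : D) : seq int :=
  [seq Num.floor (m.+1%:R * sval l (v n)) | n <- iota 0 N.+1].

Definition dual_pick (i : nat * nat * nat * seq int) : D :=
  let: (c, N, m, q) := i in
  if pselect (exists l, dual_bounded_by c l /\ dual_grid m N l = q) is left h
  then sval (cid h) else dual0.

Definition dual_seq (k : nat) : D :=
  if unpickle k is Some i then dual_pick i else dual0.

Lemma dual_seq_approx {c} N m {l : D} : dual_bounded_by c l ->
  exists k, dual_bounded_by c (dual_seq k) /\ forall n, (n <= N)%N ->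
    `|sval (dual_seq k) (v n) - sval l (v n)| < m.+1%:R^-1.
Proof.
move=> l_c; exists (pickle (c, N, m, dual_grid m N l)).
rewrite /dual_seq pickleK /=; case: pselect => [h|[]]; last by exists l.
case: cid => l' [l'_c grid] /=; split=> // n nN.
have : n \in iota 0 N.+1 by rewrite mem_iota add0n ltnS.
move: grid => /eq_in_map/[apply] /floor_eq_dist_lt1.
rewrite -mulrBr normrM gtr0_norm ?ltr0Sn // => lt1.
by rewrite -(ltr_pM2l (ltr0Sn R m)) mulfV ?gt_eqF ?ltr0Sn.
Qed.

Lemma dual_seq_separates (x z : X) :
  dual_determined v x -> dual_determined v z ->
  (forall k, sval (dual_seq k) x = sval (dual_seq k) z) ->
  forall l : D, sval l x = sval l z.
Proof.
move=> vx vz xz l; have [c l_c] := dual_boundedP l.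
apply/eqP; rewrite -subr_eq0 -normr_le0; apply/ler_addgt0Pr => e e_gt0.
have e2_gt0 : 0 < e / 2 by rewrite divr_gt0.
have [N1 x_approx] := dual_determined_approx vx l_c e2_gt0.
have [N2 z_approx] := dual_determined_approx vz l_c e2_gt0.
have [k [k_c k_l]] := dual_seq_approx (maxn N1 N2) (maxn N1 N2) l_c.
have k_close N : (N <= maxn N1 N2)%N -> forall n, (n <= N)%N ->
    `|sval (dual_seq k) (v n) - sval l (v n)| < N.+1%:R^-1.
  move=> N_le n nN; apply: lt_le_trans (k_l n (leq_trans nN N_le)) _.
  by rewrite lef_pV2 ?posrE ?ltr0Sn // ler_nat ltnS.
have := x_approx _ k_c (k_close _ (leq_maxl _ _)).
have := z_approx _ k_c (k_close _ (leq_maxr _ _)).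
rewrite -xz => kz kx; rewrite add0r.
apply: le_trans (ler_distD (sval (dual_seq k) x) _ _) _; rewrite distrC; lra.
Qed.

Lemma dual_seq_cvg_subseq {C : set X} :
  weakly_compact C -> (forall n, C (v n)) ->
  exists2 s : nat -> nat, (forall n, (s n < s n.+1)%N) &
    exists y : X,
      forall k, sval (dual_seq k) \o v \o s @ \oo --> sval (dual_seq k) y.
Proof.
move=> C_compact vC.
pose Phi (x : weakX) : prod_topology (fun _ : nat => R) :=
  fun k => sval (dual_seq k) x.
have Phi_cont : continuous Phi.
  move=> x; have x_filter := @nbhs_filter weakX x.
  by apply: prod_topology_cvg => k; exact: dual_weak_continuous.
have [y [_ vy]] : exists y, C y /\ cluster ((v : nat -> weakX) @ \oo) y.
  by apply: C_compact; exists 0%N => // n _; exact: vC.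
have [s s_incr Phi_s] := cluster_cvg_subseq (cluster_map vy (Phi_cont y)).
exists s => //; exists y => k.
exact: cvg_trans (cvg_app _ Phi_s) (prod_topology_eval_continuous k (Phi y)).
Qed.

Lemma weakly_compact_seq_cvg (C : set X) :
  weakly_compact C -> (forall n, C (v n)) ->
  exists (s : nat -> nat) (x : X),
    {homo s : m n / (m < n)%N >-> (m < n)%N} /\ weak_cvg (v \o s) x.
Proof.
move=> C_compact vC.
have [s s_incr [y dual_seq_cvg]] := dual_seq_cvg_subseq C_compact vC.
have [x [_ wx]] : exists x, C x /\ cluster ((v \o s : nat -> weakX) @ \oo) x.
  by apply: C_compact; exists 0%N => // n _; exact: vC.
exists s, x; split.
  exact: homo_ltn (fun _ _ _ => @ltn_trans _ _ _) s_incr.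
apply: dual_cvg_weak_cvg => l.
have wC n : C (v (s n)) by exact: vC.
apply: (compact_cvg_of_clusters C_compact wC (dual_weak_continuous l)).
move=> G z G_proper G_oo wz; apply/esym/dual_seq_separates => [||k].
- exact: cluster_dual_determined wx.
- exact: cluster_dual_determined wz.
rewrite (cluster_cvg_eq wx (dual_weak_continuous _ x) (dual_seq_cvg k)).
apply/esym/(cluster_cvg_eq wz (dual_weak_continuous _ z)).
exact: cvg_trans (cvg_app _ G_oo) (dual_seq_cvg k).
Qed.

End countable_dual_family.

Theorem corollary2p4 (R : realType) (X : completeNormedModType R) (C : set X) :
  weakly_compact C -> weak_SACP C CB (@F_cmc R X).
Proof.
move=> C_compact F _ f _ v vC _.
exact: weakly_compact_seq_cvg C_compact vC.
Qed.
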